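(* Let $m\ge5$ with $m\equiv1\pmod4$, let $N=3^m-1$ and $v=\frac{3^m-1}{2}-3^{(m-1)/2}-1$. Then $\gcd(v,N)=1$, and for every integer $i$ with $0\le i\le\frac{3^{(m-1)/2}-1}{4}$, the $3$-weight of $v(1+2i)\bmod N$ is congruent to $3$ modulo $4$ (i.e. the $3$-adic digit vector of $v(1+2i)\bmod N$ lies in $S_3(m)$).
   Context: For an integer $i$, $i\bmod N$ is the unique $s\in\{0,\dots,N-1\}$ with $N\mid i-s$. For $0\le s\le 3^m-1$ with $3$-adic expansion $s=\sum_{j=0}^{m-1}s_j3^j$, $s_j\in\{0,1,2\}$, the $3$-weight is $\mathrm{wt}_3(s)=\sum_j s_j$. $S_j(m)=\{(i_0,\dots,i_{m-1})\in\{0,1,2\}^m:\sum i_k\equiv j\pmod 4\}$. *)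

From mathcomp Require Import all_boot.
Set Implicit Arguments. Unset Strict Implicit. Unset Printing Implicit Defensive.

Definition digit3 (s j : nat) : nat := (s %/ 3 ^ j) %% 3.

Definition wt3 (m s : nat) : nat := \sum_(j < m) digit3 s j.

(* Put h := 3^k with k := (m-1)/2 even, so that N = 3h^2 - 1 and h = 1 mod 4.
   For 4i + 1 < h, writing h = 2w + 4i + 3, one finds v(1+2i) = iN + h^2 + wh + w:
   the residue consists of two blocks of k digits, each equal to w, under a top
   digit 1.  Its weight 2 wt3(w) + 1 is 3 mod 4 because wt3(w) has the parity of
   w, which is odd.  In the remaining case h = 4i + 1 the residue is
   (h - 2)h + (h - 1), whose blocks 3^k - 1 and 3^k - 2 weigh 2k and 2k - 1.
   Coprimality follows from N = 2v + 2(h + 1), v odd and v = 1 mod (h + 1)/2. *)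

From mathcomp Require Import all_boot zify.

Set Implicit Arguments.
Unset Strict Implicit.
Unset Printing Implicit Defensive.

Lemma digit3_low (k a b j : nat) : b < 3 ^ k -> j < k ->
  digit3 (a * 3 ^ k + b) j = digit3 b j.
Proof.
move=> hb hj; rewrite /digit3.
have -> : 3 ^ k = 3 ^ (k - j).-1 * 3 * 3 ^ j.
  by rewrite -expnSr prednK ?subn_gt0 // -expnD subnK // ltnW.
by rewrite !mulnA divnMDl ?expn_gt0 // -modnDm modnMl add0n modn_mod.
Qed.

Lemma digit3_high (k a b j : nat) : b < 3 ^ k ->
  digit3 (a * 3 ^ k + b) (k + j) = digit3 a j.
Proof.
move=> hb; rewrite /digit3 expnD divnMA divnMDl ?expn_gt0 //.
by rewrite (divn_small hb) addn0.
Qed.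

Lemma wt3_cat (k l a b : nat) : b < 3 ^ k ->
  wt3 (k + l) (a * 3 ^ k + b) = wt3 k b + wt3 l a.
Proof.
move=> hb; rewrite /wt3 big_split_ord /=; congr (_ + _); apply: eq_bigr => j _.
  exact: digit3_low.
exact: digit3_high.
Qed.

Lemma wt3_digit (b : nat) : wt3 1 b = b %% 3.
Proof. by rewrite /wt3 big_ord1 /digit3 expn0 divn1. Qed.

Lemma wt3_mod2 (n s : nat) : s < 3 ^ n -> wt3 n s = s %[mod 2].
Proof.
elim: n s => [|n IH] s hs.
  by move: hs; rewrite expn0 ltnS leqn0 => /eqP ->; rewrite /wt3 big_ord0.
have hq : s %/ 3 < 3 ^ n by rewrite ltn_divLR // -expnSr.
rewrite [in LHS](divn_eq s 3) -add1n wt3_cat ?ltn_mod // wt3_digit modn_mod.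
have := IH _ hq; have := ltn_mod s 3; have := divn_eq s 3; lia.
Qed.

Lemma wt3_exp3_pred (k : nat) : wt3 k (3 ^ k - 1) = 2 * k.
Proof.
elim: k => [|k IH]; first by rewrite /wt3 big_ord0.
have -> : 3 ^ k.+1 - 1 = (3 ^ k - 1) * 3 + 2 by have := expn_gt0 3 k; rewrite expnS; lia.
by rewrite -add1n wt3_cat // wt3_digit IH; lia.
Qed.

Lemma wt3_exp3_sub2 (k : nat) : 0 < k -> wt3 k (3 ^ k - 2) = (2 * k).-1.
Proof.
case: k => [//|k] _.
have -> : 3 ^ k.+1 - 2 = (3 ^ k - 1) * 3 + 1 by have := expn_gt0 3 k; rewrite expnS; lia.
by rewrite -add1n wt3_cat // wt3_digit wt3_exp3_pred; lia.
Qed.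

Lemma wt3_repeat_block (k w : nat) : w < 3 ^ k ->
  wt3 (k + k.+1) ((w + 3 ^ k) * 3 ^ k + w) = (wt3 k w).*2.+1.
Proof.
move=> hw; have -> : w + 3 ^ k = 1 * 3 ^ k + w by rewrite mul1n addnC.
by rewrite wt3_cat // -[k.+1]addn1 wt3_cat // wt3_digit; lia.
Qed.

Lemma wt3_last_residue (k : nat) : 0 < k ->
  wt3 (k + k.+1) ((3 ^ k - 2) * 3 ^ k + (3 ^ k - 1)) = (4 * k).-1.
Proof.
move=> k_gt0; have lt_pred : 3 ^ k - 1 < 3 ^ k by have := expn_gt0 3 k; lia.
have lt_sub2 : 3 ^ k - 2 < 3 ^ k by have := expn_gt0 3 k; lia.
rewrite wt3_cat // -[k.+1]addn1 -[3 ^ k - 2]/(0 * 3 ^ k + (3 ^ k - 2)) wt3_cat //.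
by rewrite wt3_digit wt3_exp3_pred wt3_exp3_sub2 //; lia.
Qed.

Lemma half_N_odd (a : nat) : (3 * a.*2.+1 * a.*2.+1 - 1) %/ 2 = 6 * a * a + 6 * a + 1.
Proof.
have -> : 3 * a.*2.+1 * a.*2.+1 - 1 = 2 * (6 * a * a + 6 * a + 1) by lia.
by rewrite mulKn.
Qed.

Section Multiplier.

Variable h : nat.

Local Notation N := (3 * h * h - 1).
Local Notation v := (N %/ 2 - h - 1).

Lemma coprime_v_N : h %% 4 = 1 -> 1 < h -> coprime v N.
Proof.
move=> h4 h1; have eh : h = (2 * (h %/ 4)).*2.+1 by lia.
move: h1; rewrite eh half_N_odd; set q := h %/ 4 => q_gt0; set s := 2 * q + 1.
have -> : 6 * (2 * q) * (2 * q) + 6 * (2 * q) + 1 - (2 * q).*2.+1 - 1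
          = s * (12 * q - 2) + 1 by lia.
set u := s * _ + 1.
have -> : 3 * (2 * q).*2.+1 * (2 * q).*2.+1 - 1 = 2 * u + 2 ^ 2 * s by lia.
rewrite /coprime gcdnMDl -/(coprime u _) coprimeMr coprime_pexpr // coprimen2.
have odd_u : odd u by have := modn2 u; lia.
by rewrite odd_u /coprime gcdnC /u mulnC gcdnMDl gcdn1.
Qed.

Lemma mul_v_modN (w i : nat) : h = 2 * w + 4 * i + 3 ->
  (v * (1 + 2 * i)) %% N = (w + h) * h + w.
Proof.
move=> eh; have lt_N : (w + h) * h + w < N by rewrite eh; nia.
suff -> : v * (1 + 2 * i) = i * N + ((w + h) * h + w) by rewrite modnMDl modn_small.
have {lt_N eh} -> : h = (w + 2 * i + 1).*2.+1 by lia.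
by rewrite half_N_odd; lia.
Qed.

Lemma mul_v_modN_last (i : nat) : h = 4 * i + 1 ->
  (v * (1 + 2 * i)) %% N = (h - 2) * h + (h - 1).
Proof.
move=> eh; have lt_N : (h - 2) * h + (h - 1) < N by rewrite eh; nia.
suff -> : v * (1 + 2 * i) = i * N + ((h - 2) * h + (h - 1)) by rewrite modnMDl modn_small.
have {lt_N eh} -> : h = (2 * i).*2.+1 by lia.
by rewrite half_N_odd; case: i => [|i]; lia.
Qed.

End Multiplier.

Lemma wt3_mul_v_modN (k i : nat) : 0 < k -> 3 ^ k %% 4 = 1 ->
  i <= (3 ^ k - 1) %/ 4 ->
  let h := 3 ^ k in let N := 3 * h * h - 1 in
  wt3 (k + k.+1) (((N %/ 2 - h - 1) * (1 + 2 * i)) %% N) %% 4 = 3.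
Proof.
move=> k_gt0 h4 hi h N.
have [lt_h|eq_h] : 4 * i + 1 < h \/ h = 4 * i + 1 by rewrite /h; lia.
- set w := (h - 4 * i - 3) %/ 2.
  have eh : h = 2 * w + 4 * i + 3 by rewrite /w; lia.
  have lt_w : w < 3 ^ k by rewrite -/h; lia.
  have odd_wt : wt3 k w %% 2 = 1 by rewrite wt3_mod2 //; lia.
  by rewrite (mul_v_modN eh) wt3_repeat_block //; lia.
- by rewrite (mul_v_modN_last eq_h) wt3_last_residue //; lia.
Qed.

Theorem lemma41 (m : nat) :
  5 <= m -> m %% 4 = 1 ->
  let N := 3 ^ m - 1 in
  let v := (3 ^ m - 1) %/ 2 - 3 ^ ((m - 1) %/ 2) - 1 in
  coprime v N /\
  (forall i : nat, i <= (3 ^ ((m - 1) %/ 2) - 1) %/ 4 ->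
     wt3 m ((v * (1 + 2 * i)) %% N) %% 4 = 3).
Proof.
move=> m_ge5 m4 N v; set k := (m - 1) %/ 2.
have em : m = k + k.+1 by rewrite /k; lia.
have k_gt0 : 0 < k by rewrite /k; lia.
have h4 : 3 ^ k %% 4 = 1.
  have -> : k = 2 * (m %/ 4) by rewrite /k; lia.
  by rewrite expnM -modnXm exp1n.
have e3m : 3 ^ m = 3 * 3 ^ k * 3 ^ k by rewrite em expnD expnS; lia.
rewrite /N /v e3m -/k; split; first by apply: coprime_v_N; rewrite // -(expn0 3) ltn_exp2l.
by move=> i hi; rewrite em; exact: wt3_mul_v_modN.
Qed.
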